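(* Let $\eta,\Sigma,\theta > 0$ and let $\tau \colon \mathbb{R}^{2} \to \mathbb{R}$ satisfy: ($\tau_{1}$) for every $t \in \mathbb{R}$, $y \mapsto \tau(y,t)$ is $C^{1,1}$ and $|\dot{\tau}(y_{2},t) - \dot{\tau}(y_{1},t)| \leq 2\Sigma|y_{2}-y_{1}|$ for all $y_{1},y_{2}$; ($\tau_{2}$) $\theta|t_{2}-t_{1}| \leq |\tau(y,t_{2}) - \tau(y,t_{1})| \leq \theta^{-1}|t_{2}-t_{1}|$ for all $t_{1},t_{2},y \in \mathbb{R}$; ($\tau_{3}$) $|\dot{\tau}(y,t_{2}) - \dot{\tau}(y,t_{1})| \leq \eta\sqrt{|t_{2}-t_{1}|}$ for all $y,t_{1},t_{2} \in \mathbb{R}$, where $\dot{\tau} = \partial_{y}\tau$. Define $\phi \colon \mathbb{W} \to \mathbb{L}$ by $\phi(0,y,\tau(y,t)) := (\dot{\tau}(y,t),0,0)$, let $\Gamma := \{w \cdot \phi(w) : w \in \mathbb{W}\}$, and $\Psi(y,t) := (0,y,\tau(y,t)) \cdot (\dot{\tau}(y,t),0,0)$. Then $\phi$ is an intrinsic Lipschitz function (i.e. $\Gamma$ is an intrinsic $L$-Lipschitz graph over $\mathbb{W}$), and $\Psi$ is a bilipschitz homeomorphism $(\mathbb{W},d_{\mathrm{par}}) \to (\Gamma,d)$; the intrinsic Lipschitz constant $L$ and the bilipschitz constant depend only on $\eta,\Sigma,\theta$.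
   Context: $\mathbb{H}$ is $\mathbb{R}^{3}$ with group law $(x_{1},y_{1},t_{1}) \cdot (x_{2},y_{2},t_{2}) = (x_{1}+x_{2},y_{1}+y_{2},t_{1}+t_{2}+\tfrac{1}{2}(x_{1}y_{2}-x_{2}y_{1}))$ and metric $d(p,q) = \|q^{-1}\cdot p\|$ with $\|(x,y,t)\| = \max\{\sqrt{x^{2}+y^{2}},\sqrt{|t|}\}$. $\mathbb{W} = \{(0,y,t)\} \subset \mathbb{H}$, identified with $\mathbb{R}^{2}$ with metric $d_{\mathrm{par}}((y,t),(\xi,\tau)) = \max\{|y-\xi|,|t-\tau|^{1/2}\}$, and $\mathbb{L} = \{(x,0,0)\}$. Every $p \in \mathbb{H}$ splits uniquely as $p = w \cdot v$ with $w \in \mathbb{W}$, $v \in \mathbb{L}$; $\Pi_{\mathbb{W}}(p) := w = (0,y,t+\tfrac{1}{2}xy)$ and $\Pi_{\mathbb{L}}(p) := v = (x,0,0)$ for $p = (x,y,t)$. A set $\Gamma$ is an intrinsic $L$-Lipschitz graph over $\mathbb{W}$ if $\Pi_{\mathbb{W}}|_{\Gamma}$ is a bijection onto $\mathbb{W}$ and $\|\Pi_{\mathbb{L}}(q^{-1}\cdot p)\| \leq L\|\Pi_{\mathbb{W}}(q^{-1}\cdot p)\|$ for all $p,q \in \Gamma$. By ($\tau_{2}$), for each $y$ the map $t \mapsto \tau(y,t)$ is a bijection of $\mathbb{R}$, so $\phi$ is well defined on all of $\mathbb{W}$. *)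

From Stdlib Require Import Reals Lra.
Open Scope R_scope.

(* Points of the Heisenberg group H = R^3, written (x, y, t). *)
Definition Hpt : Type := (R * R * R)%type.

Definition hx (p : Hpt) : R := fst (fst p).
Definition hy (p : Hpt) : R := snd (fst p).
Definition ht (p : Hpt) : R := snd p.

Definition hmul (p q : Hpt) : Hpt :=
  (hx p + hx q, hy p + hy q,
   ht p + ht q + / 2 * (hx p * hy q - hx q * hy p)).

Definition hinv (p : Hpt) : Hpt := (- hx p, - hy p, - ht p).

Definition hnorm (p : Hpt) : R :=
  Rmax (sqrt (hx p ^ 2 + hy p ^ 2)) (sqrt (Rabs (ht p))).

Definition hdist (p q : Hpt) : R := hnorm (hmul (hinv q) p).

Definition inW (p : Hpt) : Prop := hx p = 0.
Definition inL (p : Hpt) : Prop := hy p = 0 /\ ht p = 0.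

(* projections: p = Pi_W(p) . Pi_L(p) *)
Definition PiW (p : Hpt) : Hpt := (0, hy p, ht p + / 2 * hx p * hy p).
Definition PiL (p : Hpt) : Hpt := (hx p, 0, 0).

(* parabolic distance on W identified with R^2 *)
Definition dpar (a b : R * R) : R :=
  Rmax (Rabs (fst a - fst b)) (sqrt (Rabs (snd a - snd b))).

Definition intrinsic_Lipschitz_graph (Gam : Hpt -> Prop) (L : R) : Prop :=
  (* Pi_W restricted to Gam is a bijection onto W *)
  (forall p, Gam p -> inW (PiW p)) /\
  (forall w, inW w -> exists p, Gam p /\ PiW p = w) /\
  (forall p q, Gam p -> Gam q -> PiW p = PiW q -> p = q) /\
  (forall p q, Gam p -> Gam q ->
     hnorm (PiL (hmul (hinv q) p)) <= L * hnorm (PiW (hmul (hinv q) p))).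

(* Graph relation of phi : W -> L, phi(0,y,tau(y,t)) := (taud(y,t),0,0):
   phi_rel tau taud w v  means  v = phi(w). *)
Definition phi_rel (tau taud : R -> R -> R) (w v : Hpt) : Prop :=
  inW w /\ exists t, tau (hy w) t = ht w /\ v = (taud (hy w) t, 0, 0).

Definition Gamma (tau taud : R -> R -> R) (p : Hpt) : Prop :=
  exists w v, phi_rel tau taud w v /\ p = hmul w v.

Definition Psi (tau taud : R -> R -> R) (a : R * R) : Hpt :=
  hmul (0, fst a, tau (fst a) (snd a)) (taud (fst a) (snd a), 0, 0).

(** Write [D] for the Taylor remainder [tau(y1,t1) - tau(y2,t2) - taud(y2,t2) (y1 - y2)].
    A direct computation gives
    [Psi(b)^-1 Psi(a) = (taud(a) - taud(b), y1 - y2, D - (taud(a) - taud(b)) (y1 - y2) / 2)],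
    whose [W]-part is [(0, y1 - y2, D)] and whose [L]-part is [taud(a) - taud(b)].
    Taylor's formula at the fixed time [t2] together with (tau_2) gives
    [theta |t1 - t2| - 2 Sigma (y1 - y2)^2 <= |D| <= |t1 - t2| / theta + 2 Sigma (y1 - y2)^2],
    and (tau_1), (tau_3) give [|taud(a) - taud(b)| <= 2 Sigma |y1 - y2| + eta |t1 - t2|^(1/2)].
    So modulo [(y1 - y2)^2], [|D|] and [|t1 - t2|] are comparable, which makes the three
    gauges [||Psi(b)^-1 Psi(a)||], [||PiW (Psi(b)^-1 Psi(a))||] and [dpar a b] comparable
    and bounds [|taud(a) - taud(b)|] linearly by the second one.  Finally [t |-> tau(y,t)]
    is expanding and continuous, hence bijective, so [Psi] parametrizes [Gamma] and [phi]
    is a function. *)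

From Stdlib Require Import Reals Lra.
Open Scope R_scope.

Lemma lipschitz_continuity (f : R -> R) (K : R) :
  (forall a b, Rabs (f b - f a) <= K * Rabs (b - a)) -> continuity f.
Proof.
  intros Hf x eps Heps.
  assert (HK : 0 < Rabs K + 1) by (pose proof (Rabs_pos K); lra).
  exists (eps / (Rabs K + 1)); split.
  - apply Rdiv_lt_0_compat; lra.
  - intros z [_ Hz]; simpl in *; unfold R_dist in *.
    apply Rle_lt_trans with ((Rabs K + 1) * Rabs (z - x)).
    + pose proof (Hf x z); pose proof (Rle_abs K); pose proof (Rabs_pos (z - x)); nra.
    + apply Rmult_lt_compat_l with (r := Rabs K + 1) in Hz; [|exact HK].
      replace ((Rabs K + 1) * (eps / (Rabs K + 1))) with eps in Hz by (field; lra).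
      exact Hz.
Qed.

Lemma expanding_injective (f : R -> R) (th : R) : 0 < th ->
  (forall a b, th * Rabs (b - a) <= Rabs (f b - f a)) ->
  forall a b, f a = f b -> a = b.
Proof.
  intros Hth Hf a b Hab.
  specialize (Hf a b). rewrite Hab, Rminus_diag, Rabs_R0 in Hf.
  destruct (Req_dec a b) as [|Hne]; [easy|].
  pose proof (Rabs_pos_lt (b - a) ltac:(lra)). nra.
Qed.

Lemma IVT_value (f : R -> R) (a b v : R) : continuity f -> a <= b ->
  (f a - v) * (f b - v) <= 0 -> exists t, a <= t <= b /\ f t = v.
Proof.
  intros Hf Hab Hv.
  assert (Hfv : continuity (fun t => f t - v)).
  { apply (continuity_minus f (fct_cte v) Hf), continuity_const. now intros ? ?. }
  destruct (IVT_cor _ a b Hfv Hab Hv) as [t [Ht Hft]].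
  exists t; split; [exact Ht | lra].
Qed.

Lemma injective_continuous_between (f : R -> R) :
  continuity f -> (forall a b, f a = f b -> a = b) ->
  forall a c b, a < c < b -> (f a - f c) * (f b - f c) < 0.
Proof.
  intros Hf Hinj a c b [Hac Hcb].
  destruct (Rlt_or_le ((f a - f c) * (f b - f c)) 0) as [|Hsame]; [easy|exfalso].
  destruct (Rle_or_lt ((f c - f a) * (f b - f a)) 0) as [Ha|Ha].
  - destruct (IVT_value f c b (f a) Hf) as [t [Ht Hft]]; [lra|exact Ha|].
    apply Hinj in Hft. lra.
  - destruct (IVT_value f a c (f b) Hf) as [t [Ht Hft]]; [lra| |].
    + nra.
    + apply Hinj in Hft. lra.
Qed.

Lemma expanding_continuous_surjective (f : R -> R) (th : R) : 0 < th ->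
  continuity f -> (forall a b, th * Rabs (b - a) <= Rabs (f b - f a)) ->
  forall s, exists t, f t = s.
Proof.
  intros Hth Hf Hexp s.
  set (r := Rabs (s - f 0) / th + 1).
  assert (Hr : th * r = Rabs (s - f 0) + th) by (unfold r; field; lra).
  assert (Hr0 : 0 < r) by (pose proof (Rabs_pos (s - f 0)); nra).
  pose proof (injective_continuous_between f Hf (expanding_injective f th Hth Hexp)
                (- r) 0 r ltac:(lra)) as Hopp.
  pose proof (Hexp 0 (- r)) as Hm. pose proof (Hexp 0 r) as Hp.
  rewrite Rminus_0_r, Rabs_Ropp, Rabs_right in Hm by lra.
  rewrite Rminus_0_r, Rabs_right in Hp by lra.
  destruct (IVT_value f (- r) r s Hf) as [t [_ Ht]]; [lra| |now exists t].
  revert Hr Hopp Hm Hp; unfold Rabs; repeat destruct Rcase_abs; intros; nra.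
Qed.

Lemma taylor_lipschitz_derivative (u u' : R -> R) (K : R) :
  (forall y, derivable_pt_lim u y (u' y)) ->
  (forall y1 y2, Rabs (u' y2 - u' y1) <= K * Rabs (y2 - y1)) ->
  forall y1 y2, Rabs (u y1 - u y2 - u' y2 * (y1 - y2)) <= K * (y1 - y2) ^ 2.
Proof.
  intros Hd Hl y1 y2.
  (* mean value theorem for [y |-> u y - u' y2 * y] *)
  destruct (MVT_abs (u - mult_real_fct (u' y2) id)%F (fun y => u' y - u' y2 * 1) y2 y1)
    as [c [Hmvt Hc]].
  { intros c _. apply derivable_pt_lim_minus;
      [apply Hd | apply derivable_pt_lim_scal, derivable_pt_lim_id]. }
  unfold minus_fct, mult_real_fct, id in Hmvt.
  replace (u y1 - u y2 - u' y2 * (y1 - y2))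
    with (u y1 - u' y2 * y1 - (u y2 - u' y2 * y2)) by ring.
  rewrite Hmvt, Rmult_1_r, <- pow2_abs.
  assert (Hcy : Rabs (c - y2) <= Rabs (y1 - y2)).
  { revert Hc; unfold Rmin, Rmax; destruct (Rle_dec y2 y1) as [|?%Rnot_le_lt];
      unfold Rabs; repeat destruct Rcase_abs; intros; lra. }
  pose proof (Hl y2 c). pose proof (Rabs_pos (y1 - y2)). pose proof (Rabs_pos (c - y2)).
  assert (0 <= K).
  { specialize (Hl 0 1). rewrite Rminus_0_r, Rabs_R1 in Hl.
    pose proof (Rabs_pos (u' 1 - u' 0)); lra. }
  apply Rle_trans with (K * Rabs (c - y2) * Rabs (y1 - y2)).
  - now apply Rmult_le_compat_r.
  - simpl; rewrite Rmult_1_r, Rmult_assoc.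
    apply Rmult_le_compat_l; [lra|]. now apply Rmult_le_compat_r.
Qed.

Lemma sqrt_le_of_le_sq (X M : R) : 0 <= M -> X <= M ^ 2 -> sqrt X <= M.
Proof.
  intros HM HX. rewrite <- (sqrt_pow2 M HM). now apply sqrt_le_1_alt.
Qed.

Lemma le_sq_of_sqrt_le (X M : R) : 0 <= X -> sqrt X <= M -> X <= M ^ 2.
Proof.
  intros HX HM. rewrite <- (pow2_sqrt X HX).
  pose proof (sqrt_pos X). nra.
Qed.

Lemma Rle_div_of_mul_le (th X Y : R) : 0 < th -> th * X <= Y -> X <= Y / th.
Proof.
  intros Hth HXY. apply (Rmult_le_reg_l th); [exact Hth|].
  now replace (th * (Y / th)) with Y by (field; lra).
Qed.

Lemma Rabs_sub_half_mul (x a b : R) :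
  Rabs (x - / 2 * a * b) <= Rabs x + / 2 * (Rabs a * Rabs b) /\
  Rabs x <= Rabs (x - / 2 * a * b) + / 2 * (Rabs a * Rabs b).
Proof.
  assert (Hab : Rabs (/ 2 * a * b) = / 2 * (Rabs a * Rabs b)).
  { rewrite Rmult_assoc, !Rabs_mult, Rabs_right; lra. }
  rewrite <- Hab. split.
  - pose proof (Rabs_triang x (- (/ 2 * a * b))) as Htri.
    now rewrite Rabs_Ropp in Htri.
  - pose proof (Rabs_triang (x - / 2 * a * b) (/ 2 * a * b)) as Htri.
    now replace (x - / 2 * a * b + / 2 * a * b) with x in Htri by ring.
Qed.

Definition par_norm (y t : R) : R := Rmax (Rabs y) (sqrt (Rabs t)).

Lemma par_norm_ge (y t : R) :
  0 <= par_norm y t /\ Rabs y <= par_norm y t /\ Rabs t <= par_norm y t ^ 2.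
Proof.
  unfold par_norm. pose proof (Rabs_pos y).
  pose proof (Rmax_l (Rabs y) (sqrt (Rabs t))).
  pose proof (Rmax_r (Rabs y) (sqrt (Rabs t))) as Ht.
  repeat split; try lra. apply le_sq_of_sqrt_le; [apply Rabs_pos | exact Ht].
Qed.

Lemma par_norm_le (y t M : R) : 0 <= M -> Rabs y <= M -> Rabs t <= M ^ 2 -> par_norm y t <= M.
Proof.
  intros HM Hy Ht. apply Rmax_lub; [exact Hy | now apply sqrt_le_of_le_sq].
Qed.

Lemma dpar_par_norm (a b : R * R) : dpar a b = par_norm (fst a - fst b) (snd a - snd b).
Proof. reflexivity. Qed.

Lemma hnorm_horizontal (x : R) : hnorm (x, 0, 0) = Rabs x.
Proof.
  unfold hnorm, hx, hy, ht; simpl.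
  replace (x * (x * 1) + 0 * (0 * 1)) with (Rabs x ^ 2) by (rewrite pow2_abs; ring).
  rewrite sqrt_pow2, Rabs_R0, sqrt_0 by apply Rabs_pos.
  apply Rmax_left, Rabs_pos.
Qed.

Lemma hnorm_vertical (y t : R) : hnorm (0, y, t) = par_norm y t.
Proof.
  unfold hnorm, par_norm, hx, hy, ht; simpl.
  replace (0 * (0 * 1) + y * (y * 1)) with (Rabs y ^ 2) by (rewrite pow2_abs; ring).
  now rewrite sqrt_pow2 by apply Rabs_pos.
Qed.

Lemma hdist_nonneg (p q : Hpt) : 0 <= hdist p q.
Proof.
  unfold hdist, hnorm. eapply Rle_trans; [apply sqrt_pos | apply Rmax_r].
Qed.

Lemma dpar_nonneg (a b : R * R) : 0 <= dpar a b.
Proof. rewrite dpar_par_norm. apply par_norm_ge. Qed.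

Lemma hnorm_ge (x y t : R) :
  0 <= hnorm (x, y, t) /\ Rabs x <= hnorm (x, y, t) /\ Rabs y <= hnorm (x, y, t) /\
  Rabs t <= hnorm (x, y, t) ^ 2.
Proof.
  unfold hnorm, hx, hy, ht; simpl fst; simpl snd.
  set (N := Rmax _ _).
  assert (Hxy : sqrt (x ^ 2 + y ^ 2) <= N) by apply Rmax_l.
  assert (Ht : sqrt (Rabs t) <= N) by apply Rmax_r.
  assert (Habs : forall u v, Rabs u <= sqrt (u ^ 2 + v ^ 2)).
  { intros u v. rewrite <- (sqrt_pow2 (Rabs u)), pow2_abs by apply Rabs_pos.
    apply sqrt_le_1_alt. pose proof (pow2_ge_0 v). lra. }
  pose proof (Habs x y). pose proof (Habs y x) as Hy. rewrite Rplus_comm in Hy.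
  pose proof (Rabs_pos x).
  repeat split; try lra. apply le_sq_of_sqrt_le; [apply Rabs_pos | exact Ht].
Qed.

Lemma hnorm_le (x y t M : R) : 0 <= M -> x ^ 2 + y ^ 2 <= M ^ 2 -> Rabs t <= M ^ 2 ->
  hnorm (x, y, t) <= M.
Proof.
  intros HM Hxy Ht. apply Rmax_lub; now apply sqrt_le_of_le_sq.
Qed.

Section Parametrization.

Variables tau taud : R -> R -> R.

Definition taylor_rem (y1 t1 y2 t2 : R) : R :=
  tau y1 t1 - tau y2 t2 - taud y2 t2 * (y1 - y2).

Lemma Psi_inv_mul (y1 t1 y2 t2 : R) :
  hmul (hinv (Psi tau taud (y2, t2))) (Psi tau taud (y1, t1)) =
  (taud y1 t1 - taud y2 t2, y1 - y2,
   taylor_rem y1 t1 y2 t2 - / 2 * (taud y1 t1 - taud y2 t2) * (y1 - y2)).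
Proof.
  unfold Psi, hmul, hinv, taylor_rem, hx, hy, ht; simpl.
  f_equal; [f_equal|]; field.
Qed.

Lemma PiW_Psi_inv_mul (y1 t1 y2 t2 : R) :
  PiW (hmul (hinv (Psi tau taud (y2, t2))) (Psi tau taud (y1, t1))) =
  (0, y1 - y2, taylor_rem y1 t1 y2 t2).
Proof.
  rewrite Psi_inv_mul. unfold PiW, hx, hy, ht; simpl. f_equal. field.
Qed.

Lemma PiL_Psi_inv_mul (y1 t1 y2 t2 : R) :
  PiL (hmul (hinv (Psi tau taud (y2, t2))) (Psi tau taud (y1, t1))) =
  (taud y1 t1 - taud y2 t2, 0, 0).
Proof. now rewrite Psi_inv_mul. Qed.

Lemma PiW_Psi (y t : R) : PiW (Psi tau taud (y, t)) = (0, y, tau y t).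
Proof.
  unfold PiW, Psi, hmul, hx, hy, ht; simpl. f_equal; [f_equal|]; field.
Qed.

Lemma Gamma_Psi_iff (p : Hpt) : Gamma tau taud p <-> exists a, p = Psi tau taud a.
Proof.
  split.
  - intros [[[x y] s] [v [[Hw [t [Ht ->]]] ->]]].
    unfold inW, hx, hy, ht in *; simpl in *; subst.
    now exists (y, t).
  - intros [[y t] ->]. exists (0, y, tau y t), (taud y t, 0, 0).
    split; [|reflexivity]. split; [reflexivity|]. now exists t.
Qed.

Variables Sigma eta theta : R.
Hypothesis theta_gt0 : 0 < theta.
Hypothesis Sigma_ge0 : 0 <= Sigma.
Hypothesis eta_ge0 : 0 <= eta.
Hypothesis tau_derivable :
  forall y t, derivable_pt_lim (fun z => tau z t) y (taud y t).
Hypothesis taud_lipschitz_y :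
  forall t y1 y2, Rabs (taud y2 t - taud y1 t) <= 2 * Sigma * Rabs (y2 - y1).
Hypothesis tau_bilipschitz_t :
  forall y t1 t2, theta * Rabs (t2 - t1) <= Rabs (tau y t2 - tau y t1) /\
                  Rabs (tau y t2 - tau y t1) <= / theta * Rabs (t2 - t1).
Hypothesis taud_holder_t :
  forall y t1 t2, Rabs (taud y t2 - taud y t1) <= eta * sqrt (Rabs (t2 - t1)).

Lemma tau_injective_t (y t1 t2 : R) : tau y t1 = tau y t2 -> t1 = t2.
Proof.
  apply (expanding_injective (tau y) theta theta_gt0).
  intros a b; apply tau_bilipschitz_t.
Qed.

Lemma tau_surjective_t (y s : R) : exists t, tau y t = s.
Proof.
  apply (expanding_continuous_surjective (tau y) theta theta_gt0).
  - apply (lipschitz_continuity _ (/ theta)). intros a b; apply tau_bilipschitz_t.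
  - intros a b; apply tau_bilipschitz_t.
Qed.

Lemma phi_well_defined (w : Hpt) : inW w ->
  exists v, phi_rel tau taud w v /\ inL v /\ forall v', phi_rel tau taud w v' -> v' = v.
Proof.
  intros Hw. destruct (tau_surjective_t (hy w) (ht w)) as [t Ht].
  exists (taud (hy w) t, 0, 0). split; [|split].
  - split; [exact Hw|]. now exists t.
  - now split.
  - intros v' [_ [t' [Ht' ->]]].
    now rewrite (tau_injective_t (hy w) t' t) by congruence.
Qed.

Lemma taud_increment (y1 t1 y2 t2 : R) :
  Rabs (taud y1 t1 - taud y2 t2) <= 2 * Sigma * Rabs (y1 - y2) + eta * sqrt (Rabs (t1 - t2)).
Proof.
  replace (taud y1 t1 - taud y2 t2)
    with ((taud y1 t1 - taud y1 t2) + (taud y1 t2 - taud y2 t2)) by ring.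
  eapply Rle_trans; [apply Rabs_triang|].
  pose proof (taud_holder_t y1 t2 t1). pose proof (taud_lipschitz_y t2 y2 y1). lra.
Qed.

(* [taylor_rem] differs from [tau y1 t1 - tau y1 t2] by the Taylor remainder of
   [tau (.) t2] between [y2] and [y1]. *)
Lemma taylor_rem_bounds (y1 t1 y2 t2 : R) :
  theta * Rabs (t1 - t2) <= Rabs (taylor_rem y1 t1 y2 t2) + 2 * Sigma * (y1 - y2) ^ 2 /\
  Rabs (taylor_rem y1 t1 y2 t2) <= / theta * Rabs (t1 - t2) + 2 * Sigma * (y1 - y2) ^ 2.
Proof.
  pose proof (taylor_lipschitz_derivative (fun z => tau z t2) (fun z => taud z t2)
    (2 * Sigma) (fun y => tau_derivable y t2) (taud_lipschitz_y t2) y1 y2) as Htaylor.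
  destruct (tau_bilipschitz_t y1 t2 t1) as [Hlow Hup].
  set (E := tau y1 t2 - tau y2 t2 - taud y2 t2 * (y1 - y2)) in Htaylor.
  assert (HD : taylor_rem y1 t1 y2 t2 = (tau y1 t1 - tau y1 t2) + E)
    by (unfold taylor_rem, E; ring).
  rewrite HD.
  pose proof (Rabs_triang (tau y1 t1 - tau y1 t2) E).
  pose proof (Rabs_triang_inv (tau y1 t1 - tau y1 t2) (- E)) as Hinv.
  rewrite Rabs_Ropp in Hinv.
  replace (tau y1 t1 - tau y1 t2 - - E) with (tau y1 t1 - tau y1 t2 + E) in Hinv by ring.
  cbv beta in Htaylor. split; lra.
Qed.

Lemma Gamma_intrinsic_cone (p q : Hpt) : Gamma tau taud p -> Gamma tau taud q ->
  hnorm (PiL (hmul (hinv q) p)) <=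
  (2 * Sigma + eta * sqrt ((1 + 2 * Sigma) / theta)) * hnorm (PiW (hmul (hinv q) p)).
Proof.
  intros [[y1 t1] ->]%Gamma_Psi_iff [[y2 t2] ->]%Gamma_Psi_iff.
  rewrite PiL_Psi_inv_mul, PiW_Psi_inv_mul, hnorm_horizontal, hnorm_vertical.
  destruct (par_norm_ge (y1 - y2) (taylor_rem y1 t1 y2 t2)) as [HN0 [Hy HD]].
  set (N := par_norm _ _) in *.
  set (c := (1 + 2 * Sigma) / theta).
  assert (Hc : 0 <= c) by (apply Rlt_le, Rdiv_lt_0_compat; lra).
  assert (Ht : Rabs (t1 - t2) <= c * N ^ 2).
  { destruct (taylor_rem_bounds y1 t1 y2 t2) as [Hlow _].
    rewrite <- pow2_abs in Hlow.
    unfold c; replace ((1 + 2 * Sigma) / theta * N ^ 2)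
      with ((1 + 2 * Sigma) * N ^ 2 / theta) by (field; lra).
    apply Rle_div_of_mul_le; [exact theta_gt0|].
    assert (Rabs (y1 - y2) ^ 2 <= N ^ 2) by (apply pow_incr; split; [apply Rabs_pos | exact Hy]).
    nra. }
  assert (Hsqrt : sqrt (Rabs (t1 - t2)) <= sqrt c * N).
  { apply sqrt_le_of_le_sq.
    - pose proof (sqrt_pos c). nra.
    - now rewrite Rpow_mult_distr, pow2_sqrt. }
  pose proof (taud_increment y1 t1 y2 t2). nra.
Qed.

Lemma Gamma_intrinsic_Lipschitz :
  intrinsic_Lipschitz_graph (Gamma tau taud)
    (2 * Sigma + eta * sqrt ((1 + 2 * Sigma) / theta)).
Proof.
  split; [|split; [|split]].
  - reflexivity.
  - intros [[x y] s] Hw. destruct (tau_surjective_t y s) as [t Ht].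
    exists (Psi tau taud (y, t)). split.
    + apply Gamma_Psi_iff. now exists (y, t).
    + unfold inW, hx in Hw; simpl in Hw. now rewrite PiW_Psi, Ht, Hw.
  - intros p q [[y1 t1] ->]%Gamma_Psi_iff [[y2 t2] ->]%Gamma_Psi_iff.
    rewrite !PiW_Psi. intros [= <- Ht].
    now rewrite (tau_injective_t y1 t1 t2 Ht).
  - exact Gamma_intrinsic_cone.
Qed.

Lemma Psi_lipschitz (a b : R * R) :
  hdist (Psi tau taud a) (Psi tau taud b) <= (1 + 4 * Sigma + eta + / theta) * dpar a b.
Proof.
  destruct a as [y1 t1], b as [y2 t2].
  unfold hdist. rewrite Psi_inv_mul, dpar_par_norm; simpl fst; simpl snd.
  destruct (par_norm_ge (y1 - y2) (t1 - t2)) as [HN0 [Hy Ht]].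
  set (N := par_norm _ _) in *.
  set (K := 2 * Sigma + eta).
  set (C := 1 + 4 * Sigma + eta + / theta).
  assert (Hinv : 0 < / theta) by (apply Rinv_0_lt_compat; lra).
  assert (Hdtau : Rabs (taud y1 t1 - taud y2 t2) <= K * N).
  { pose proof (taud_increment y1 t1 y2 t2).
    assert (sqrt (Rabs (t1 - t2)) <= N) by (apply sqrt_le_of_le_sq; assumption).
    unfold K; nra. }
  destruct (Rabs_sub_half_mul (taylor_rem y1 t1 y2 t2)
              (taud y1 t1 - taud y2 t2) (y1 - y2)) as [Hrem _].
  destruct (taylor_rem_bounds y1 t1 y2 t2) as [_ Hup].
  rewrite <- pow2_abs in Hup.
  assert (HK : 0 <= K) by (unfold K; lra).
  assert (HKC : 1 + K <= C) by (unfold C, K; lra).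
  assert (HdtauN : Rabs (taud y1 t1 - taud y2 t2) ^ 2 <= (K * N) ^ 2)
    by (apply pow_incr; split; [apply Rabs_pos | exact Hdtau]).
  assert (HyN : Rabs (y1 - y2) ^ 2 <= N ^ 2)
    by (apply pow_incr; split; [apply Rabs_pos | exact Hy]).
  assert (Hprod : Rabs (taud y1 t1 - taud y2 t2) * Rabs (y1 - y2) <= K * N * N)
    by (apply Rmult_le_compat; auto using Rabs_pos).
  assert (HCN : ((1 + K) * N) ^ 2 <= (C * N) ^ 2)
    by (apply pow_incr; split; [|apply Rmult_le_compat_r]; nra).
  apply hnorm_le.
  - unfold C; nra.
  - rewrite <- (pow2_abs (taud _ _ - _)), <- (pow2_abs (y1 - y2)).
    rewrite Rpow_mult_distr in HdtauN, HCN |- *. nra.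
  - apply Rle_trans with ((/ theta + 2 * Sigma + / 2 * K) * N ^ 2); [nra|].
    rewrite Rpow_mult_distr. apply Rmult_le_compat_r; [nra|].
    unfold C, K in *; nra.
Qed.

Lemma Psi_colipschitz (a b : R * R) :
  dpar a b <= (1 + (2 + 2 * Sigma) / theta) * hdist (Psi tau taud a) (Psi tau taud b).
Proof.
  destruct a as [y1 t1], b as [y2 t2].
  unfold hdist. rewrite Psi_inv_mul, dpar_par_norm; simpl fst; simpl snd.
  destruct (hnorm_ge (taud y1 t1 - taud y2 t2) (y1 - y2)
              (taylor_rem y1 t1 y2 t2 - / 2 * (taud y1 t1 - taud y2 t2) * (y1 - y2)))
    as [HH0 [Hx [Hy Ht]]].
  set (H := hnorm _) in *.
  set (c := (2 + 2 * Sigma) / theta).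
  assert (Hc : 0 <= c) by (apply Rlt_le, Rdiv_lt_0_compat; lra).
  destruct (Rabs_sub_half_mul (taylor_rem y1 t1 y2 t2)
              (taud y1 t1 - taud y2 t2) (y1 - y2)) as [_ Hrem].
  assert (Hdt : Rabs (t1 - t2) <= c * H ^ 2).
  { destruct (taylor_rem_bounds y1 t1 y2 t2) as [Hlow _].
    rewrite <- pow2_abs in Hlow.
    unfold c; replace ((2 + 2 * Sigma) / theta * H ^ 2)
      with ((2 + 2 * Sigma) * H ^ 2 / theta) by (field; lra).
    apply Rle_div_of_mul_le; [exact theta_gt0|].
    assert (Rabs (y1 - y2) ^ 2 <= H ^ 2)
      by (apply pow_incr; split; [apply Rabs_pos | exact Hy]).
    assert (Rabs (taud y1 t1 - taud y2 t2) * Rabs (y1 - y2) <= H * H)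
      by (apply Rmult_le_compat; auto using Rabs_pos).
    simpl in *; nra. }
  assert (Hc1 : c <= (1 + c) ^ 2) by nra.
  apply par_norm_le; nra.
Qed.

Lemma Psi_bilipschitz (a b : R * R) :
  / (2 + 4 * Sigma + eta + (3 + 2 * Sigma) / theta) * dpar a b
    <= hdist (Psi tau taud a) (Psi tau taud b) /\
  hdist (Psi tau taud a) (Psi tau taud b)
    <= (2 + 4 * Sigma + eta + (3 + 2 * Sigma) / theta) * dpar a b.
Proof.
  set (C1 := 1 + 4 * Sigma + eta + / theta).
  set (C2 := 1 + (2 + 2 * Sigma) / theta).
  replace (2 + 4 * Sigma + eta + (3 + 2 * Sigma) / theta) with (C1 + C2)
    by (unfold C1, C2; field; lra).
  pose proof (Psi_lipschitz a b) as Hup. pose proof (Psi_colipschitz a b) as Hlow.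
  fold C1 in Hup; fold C2 in Hlow.
  assert (HC1 : 0 < C1) by (pose proof (Rinv_0_lt_compat _ theta_gt0); unfold C1; lra).
  assert (HC2 : 0 < C2)
    by (pose proof (Rdiv_lt_0_compat (2 + 2 * Sigma) _ ltac:(lra) theta_gt0); unfold C2; lra).
  pose proof (Rmult_le_pos C1 _ (Rlt_le _ _ HC1) (hdist_nonneg (Psi tau taud a) (Psi tau taud b))).
  pose proof (Rmult_le_pos C2 _ (Rlt_le _ _ HC2) (dpar_nonneg a b)).
  split.
  - apply (Rmult_le_reg_l (C1 + C2)); [lra|].
    rewrite <- Rmult_assoc, Rinv_r, Rmult_1_l by lra. lra.
  - lra.
Qed.

End Parametrization.

Theorem proposition7p5 :
  forall eta Sigma theta : R, 0 < eta -> 0 < Sigma -> 0 < theta ->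
  exists L C : R, 0 < L /\ 0 < C /\
  forall tau taud : R -> R -> R,
    (* (tau_1): y |-> tau(y,t) is C^{1,1} with derivative taud(.,t), 2 Sigma-Lipschitz *)
    (forall y t, derivable_pt_lim (fun z => tau z t) y (taud y t)) ->
    (forall t y1 y2, Rabs (taud y2 t - taud y1 t) <= 2 * Sigma * Rabs (y2 - y1)) ->
    (* (tau_2) *)
    (forall y t1 t2, theta * Rabs (t2 - t1) <= Rabs (tau y t2 - tau y t1) /\
                     Rabs (tau y t2 - tau y t1) <= / theta * Rabs (t2 - t1)) ->
    (* (tau_3) *)
    (forall y t1 t2, Rabs (taud y t2 - taud y t1) <= eta * sqrt (Rabs (t2 - t1))) ->
    (* phi is well defined: a function W -> L *)
    (forall w, inW w -> exists v, phi_rel tau taud w v /\ inL v /\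
        forall v', phi_rel tau taud w v' -> v' = v) /\
    (* Gamma is an intrinsic L-Lipschitz graph over W *)
    intrinsic_Lipschitz_graph (Gamma tau taud) L /\
    (* Psi is a bilipschitz homeomorphism (W, d_par) -> (Gamma, d) *)
    (forall a, Gamma tau taud (Psi tau taud a)) /\
    (forall p, Gamma tau taud p -> exists a, Psi tau taud a = p) /\
    (forall a b, / C * dpar a b <= hdist (Psi tau taud a) (Psi tau taud b) /\
                 hdist (Psi tau taud a) (Psi tau taud b) <= C * dpar a b).
Proof.
  intros eta Sigma theta Heta HSigma Htheta.
  exists (2 * Sigma + eta * sqrt ((1 + 2 * Sigma) / theta)),
         (2 + 4 * Sigma + eta + (3 + 2 * Sigma) / theta).
  split; [pose proof (sqrt_pos ((1 + 2 * Sigma) / theta)); nra|].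
  split; [pose proof (Rdiv_lt_0_compat (3 + 2 * Sigma) _ ltac:(lra) Htheta); lra|].
  intros tau taud Hderiv Hlip Hbilip Hholder.
  assert (HSigma0 : 0 <= Sigma) by lra.
  assert (Heta0 : 0 <= eta) by lra.
  split; [|split; [|split; [|split]]].
  - exact (phi_well_defined tau taud theta Htheta Hbilip).
  - exact (Gamma_intrinsic_Lipschitz tau taud Sigma eta theta
             Htheta HSigma0 Heta0 Hderiv Hlip Hbilip Hholder).
  - intros a. apply Gamma_Psi_iff. now exists a.
  - intros p [a ->]%Gamma_Psi_iff. now exists a.
  - exact (Psi_bilipschitz tau taud Sigma eta theta
             Htheta HSigma0 Heta0 Hderiv Hlip Hbilip Hholder).
Qed.
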